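(* Let $\ell,k\in\mathbb{Z}_{>0}$, let $D\subseteq\mathbb{R}^\ell$ be convex and $\sigma:\mathbb{R}^\ell\to\mathbb{R}^k$ affine, and set $D_\sigma:=\operatorname{conv}(D\cap\sigma^{-1}(\mathbb{Z}^k))$. If $\operatorname{rdist}(D_\sigma,D)=\delta>0$, then $\operatorname{width}(\sigma(D_\sigma))\leq\frac{1+\delta}{\delta}\operatorname{Flt}(k)$.
   Context: For $B\subseteq\mathbb{R}^k$, $\operatorname{width}(B)=\inf_{v\in\mathbb{Z}^k\setminus\{0\}}\big(\sup_{x\in B}v^\intercal x-\inf_{x\in B}v^\intercal x\big)$. $\operatorname{Flt}(k)$ is the smallest $\lambda\geq0$ such that every convex, closed, full-dimensional $B\subseteq\mathbb{R}^k$ with $B\cap\mathbb{Z}^k=\emptyset$ satisfies $\operatorname{width}(B)\leq\lambda$. For convex $A\subseteq B\subseteq\mathbb{R}^\ell$, $\operatorname{rdist}(A,B)=\sup_{\pi}\frac{\sup_{b\in B}\inf_{a\in A}|\pi(b)-\pi(a)|}{\sup_{a,a'\in A}|\pi(a)-\pi(a')|}$ over linear $\pi:\mathbb{R}^\ell\to\mathbb{R}$ (denominator $\infty$ and $0/0$ read as $0$; $\operatorname{rdist}(\emptyset,\emptyset)=0$, $\operatorname{rdist}(\emptyset,B)=\infty$ for $B\ne\emptyset$). *)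

From HB Require Import structures.
From mathcomp Require Import all_boot all_order all_algebra.
From mathcomp Require Import all_classical all_reals all_analysis.
Set Implicit Arguments. Unset Strict Implicit. Unset Printing Implicit Defensive.
Import Order.TTheory GRing.Theory Num.Theory numFieldNormedType.Exports.
Local Open Scope classical_set_scope.
Local Open Scope ring_scope.

Section Defs.
Variable R : realType.

Definition Zlattice (k : nat) : set 'rV[R]_k :=
  [set x | forall i : 'I_k, x ord0 i \is a Num.int].

Definition idot (k : nat) (v : 'rV[int]_k) (x : 'rV[R]_k) : R :=
  \sum_(i < k) (v ord0 i)%:~R * x ord0 i.

Definition width (k : nat) (B : set 'rV[R]_k) : \bar R :=
  ereal_inf [set (ereal_sup [set (idot v x)%:E | x in B]
                  - ereal_inf [set (idot v x)%:E | x in B])%E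
            | v in [set v : 'rV[int]_k | v != 0]].

(* Flt(k): the smallest lambda >= 0 such that every convex, closed,
   full-dimensional (nonempty interior) lattice-free B has width <= lambda.
   (Infimum in \bar R; +oo if no such real lambda exists.) *)
Definition Flt (k : nat) : \bar R :=
  ereal_inf [set lam%:E | lam in
    [set lam : R | 0 <= lam /\
      forall B : set 'rV[R]_k,
        convex_set (B : set (convex_lmodType 'rV[R]_k)) -> closed B ->
        interior B !=set0 -> B `&` @Zlattice k = set0 ->
        (width B <= lam%:E)%E]].

Definition convhull (l : nat) (S : set 'rV[R]_l) : set 'rV[R]_l :=
  \bigcap_(C in [set C : set 'rV[R]_l |
                  convex_set (C : set (convex_lmodType 'rV[R]_l)) /\ S `<=` C]) C.

(* The ratio for a fixed linear functional pi, with the conventions: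
   denominator +oo gives 0, 0/0 gives 0 (and c/0 = +oo for c > 0). *)
Definition rdist_ratio (l : nat) (A B : set 'rV[R]_l)
    (pi : {linear 'rV[R]_l -> R^o}) : \bar R :=
  let num := ereal_sup [set ereal_inf [set (`|pi b - pi a|)%:E | a in A]
                       | b in B] in
  let den := ereal_sup [set (`|pi a - pi a'|)%:E
                       | a in A & a' in A] in
  if den == +oo%E then 0%E
  else if den == 0%E then (if num == 0%E then 0%E else +oo%E)
  else (num * ((fine den)^-1)%:E)%E.

(* rdist(A,B), with rdist(empty,empty) = 0 and rdist(empty,B) = +oo for B nonempty. *)
Definition rdist (l : nat) (A B : set 'rV[R]_l) : \bar R :=
  if `[< A = set0 >] then (if `[< B = set0 >] then 0%E else +oo%E)
  else ereal_sup [set rdist_ratio A B pi | pi in [set: {linear 'rV[R]_l -> R^o}]].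

Definition affine_map (l k : nat) (sigma : 'rV[R]_l -> 'rV[R]_k) : Prop :=
  exists (M : 'M[R]_(l, k)) (b : 'rV[R]_k), forall x, sigma x = x *m M + b.

End Defs.

Arguments Zlattice {R} k.
Arguments Flt {R} k.
Arguments width {R k} B.
Arguments convhull {R l} S.
Arguments rdist {R l} A B.
Arguments affine_map {R l k} sigma.

(* Write A for conv(D ∩ σ⁻¹(ℤ^k)).  If the lattice points σ(D ∩ σ⁻¹(ℤ^k)) lie
   in a rational hyperplane, σ(A) has lattice width 0; otherwise σ(A) is a
   full-dimensional convex set.  For r < δ the definition of rdist yields a
   linear functional π and a point b ∈ D such that π(b) is farther than
   r·diam π(A) from π(A).  Then the homothetic copy of σ(A) with centre σ(b)
   and ratio μ = r/(1+r) is lattice-free: a lattice point σ(b) + μ(σ(a) - σ(b))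
   of it is the image of x = μa + (1-μ)b ∈ D, so x ∈ A, but
   π(b) - π(x) = r(π(x) - π(a)) is at most r·diam π(A).  Shrinking this copy
   a little further gives a closed convex lattice-free body with interior,
   whose width is at most Flt(k); hence width σ(A) ≤ Flt(k)/μ, and μ can be
   taken arbitrarily close to δ/(1+δ). *)

From HB Require Import structures.
From mathcomp Require Import all_boot all_order all_algebra.
From mathcomp Require Import all_classical all_reals all_analysis.
From mathcomp Require Import ring lra.

Set Implicit Arguments.
Unset Strict Implicit.
Unset Printing Implicit Defensive.
Import Order.TTheory GRing.Theory Num.Theory numFieldNormedType.Exports.
Local Open Scope classical_set_scope.
Local Open Scope ring_scope.

Section Convexity.
Variable R : realType.

Definition convex (M : lmodType R) (A : set M) :=
  forall x y t, A x -> A y -> 0 <= t -> t <= 1 -> A (t *: x + (1 - t) *: y).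

Definition affine (M N : lmodType R) (f : M -> N) :=
  forall x y t, f (t *: x + (1 - t) *: y) = t *: f x + (1 - t) *: f y.

Definition dilate (M : lmodType R) (q : M) (mu : R) (x : M) := q + mu *: (x - q).

Lemma convex_setP (M : lmodType R) (A : set M) :
  convex_set (A : set (convex_lmodType M)) <-> convex A.
Proof.
split=> [cA x y t Ax Ay t0 t1|cA x y s]; last first.
  by rewrite !inE => Ax Ay; exact: cA (ge0 s) (le1 s).
by have := cA x y (Itv01 t0 t1); rewrite !inE => /(_ Ax Ay).
Qed.

Lemma affine_dilate (M : lmodType R) (q : M) mu : affine (dilate q mu).
Proof.
move=> x y t; rewrite /dilate.
have -> : t *: x + (1 - t) *: y - q = t *: (x - q) + (1 - t) *: (y - q).
  by rewrite !scalerBr addrACA -opprD -scalerDl subrKC scale1r.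
rewrite (scalerDr mu) !scalerA [mu * t]mulrC [mu * (1 - t)]mulrC -!scalerA.
by rewrite (scalerDr t) (scalerDr (1 - t)) addrACA -scalerDl subrKC scale1r.
Qed.

Lemma affine_map_affine l k (sigma : 'rV[R]_l -> 'rV[R]_k) :
  affine_map sigma -> affine sigma.
Proof.
move=> [M [c sigmaE]] x y t; rewrite !sigmaE mulmxDl -!scalemxAl.
by move: (x *m M) (y *m M) => X Y; apply/rowP => j; rewrite !mxE; ring.
Qed.

Lemma convex_image (M N : lmodType R) (f : M -> N) (A : set M) :
  affine f -> convex A -> convex (f @` A).
Proof.
move=> af cA _ _ t [x Ax <-] [y Ay <-] t0 t1.
by exists (t *: x + (1 - t) *: y); [exact: cA | rewrite af].
Qed.

Lemma convex_preimage (M N : lmodType R) (f : M -> N) (B : set N) :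
  affine f -> convex B -> convex (f @^-1` B).
Proof. by move=> af cB x y t Bx By t0 t1; rewrite /preimage /= af; exact: cB. Qed.

Lemma convhull_sub n (S : set 'rV[R]_n) : S `<=` convhull S.
Proof. by move=> x Sx C [_]; apply. Qed.

Lemma convhull_min n (S C : set 'rV[R]_n) : convex C -> S `<=` C -> convhull S `<=` C.
Proof. by move=> /convex_setP cC SC x; apply. Qed.

Lemma convex_convhull n (S : set 'rV[R]_n) : convex (convhull S).
Proof.
move=> x y t hx hy t0 t1 C [cC SC].
by move/convex_setP: (cC); apply=> //; [apply: hx | apply: hy].
Qed.

Lemma convhull0 n : convhull (set0 : set 'rV[R]_n) = set0.
Proof. by rewrite -subset0; apply: convhull_min => // x y t []. Qed.

Lemma convex_comb_mem n (U : set 'rV[R]_n) p0 m (p : 'I_m -> 'rV[R]_n)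
    (lam : 'I_m -> R) :
  convex U -> U p0 -> (forall i, U (p i)) -> (forall i, 0 <= lam i) ->
  \sum_i lam i <= 1 -> U (p0 + \sum_i lam i *: (p i - p0)).
Proof.
move=> cU Up0; elim: m p lam => [|m IHm] p lam Up lam_ge0 lam_le1.
  by rewrite big_ord0 addr0.
rewrite big_ord_recr /=; rewrite big_ord_recr /= in lam_le1.
set a := lam ord_max in lam_le1 *.
set s := \sum_(i < m) _ in lam_le1.
set S := \sum_(i < m) _.
have s_ge0 : 0 <= s by rewrite sumr_ge0.
have [a1|a_neq1] := eqVneq a 1.
  have s0 : s = 0 by apply/eqP; rewrite eq_le s_ge0 andbT; move: lam_le1; rewrite a1; lra.
  have lam0 i : lam (widen_ord (leqnSn m) i) = 0.
    apply/eqP; move/eqP: s0; rewrite psumr_eq0 // => /allP /(_ i (mem_index_enum _)).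
    by move/implyP; apply.
  rewrite /S big1 => [|i _]; last by rewrite lam0 scale0r.
  by rewrite add0r a1 scale1r addrC subrK.
have a_lt1 : 0 < 1 - a by rewrite subr_gt0 lt_neqAle a_neq1 (le_trans _ lam_le1) // lerDr.
have := IHm (fun i => p (widen_ord (leqnSn m) i))
  (fun i => lam (widen_ord (leqnSn m) i) / (1 - a))
  (fun i => Up _) (fun i => divr_ge0 (lam_ge0 _) (ltW a_lt1)).
rewrite -mulr_suml -/s ler_pdivrMr // mul1r lerBrDr => /(_ lam_le1).
have -> : \sum_(i < m) (lam (widen_ord (leqnSn m) i) / (1 - a)) *:
    (p (widen_ord (leqnSn m) i) - p0) = (1 - a)^-1 *: S.
  by rewrite /S scaler_sumr; apply: eq_bigr => i _; rewrite scalerA mulrC.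
move=> US.
have -> : p0 + (S + a *: (p ord_max - p0)) =
    a *: p ord_max + (1 - a) *: (p0 + (1 - a)^-1 *: S).
  by apply/rowP => j; rewrite !mxE; field; rewrite gt_eqF.
by apply: cU (Up _) US (lam_ge0 _) _; rewrite -subr_ge0 ltW.
Qed.

End Convexity.

Arguments convhull_sub {R n} S.
Arguments convex_convhull {R n} S.

Section Topology.
Variable R : realType.

Lemma ball_rowE n (x y : 'rV[R]_n) e : ball x e y <-> `|x - y| < e.
Proof. by rewrite -ball_normE. Qed.

Lemma row_entry_le_norm n (x : 'rV[R]_n) j : `|x 0 j| <= `|x|.
Proof.
rewrite [leRHS]/Num.Def.normr /= mx_normrE; apply/bigmax_geP; right => /=.
by exists (0, j).
Qed.

Lemma mulmx_row_entry_le n m (y : 'rV[R]_n) (N : 'M[R]_(n, m)) i :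
  `|(y *m N) 0 i| <= `|y| * \sum_j \sum_i' `|N j i'|.
Proof.
rewrite mxE mulr_sumr; apply: le_trans (ler_norm_sum _ _ _) (ler_sum _ _) => j _.
rewrite normrM; apply: ler_pM => //; first exact: row_entry_le_norm.
by rewrite (bigD1 i) //= lerDl sumr_ge0.
Qed.

(* The rows of [M] span a simplex with vertex [p0]; a small ball around a
   point of its interior has barycentric coordinates close to [1/(2k)]. *)
Lemma convex_simplex_interior k (U : set 'rV[R]_k) p0 (M : 'M[R]_k) :
  (0 < k)%N -> convex U -> U p0 -> M \in unitmx ->
  (forall i, U (p0 + row i M)) -> interior U !=set0.
Proof.
move=> k_gt0 cU Up0 uM UM.
have k0 : 0 < k%:R :> R by rewrite ltr0n.
pose C := \sum_i \sum_j `|invmx M i j| + 1.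
have C0 : 0 < C by rewrite ltr_pwDr // sumr_ge0 // => i _; rewrite sumr_ge0.
pose c0 : R := (2 * k%:R)^-1.
pose q := p0 + const_mx c0 *m M.
exists q; apply/nbhs_ballP; exists (4 * k%:R * C)^-1 => /= [|x /ball_rowE qx].
  by rewrite invr_gt0 !mulr_gt0.
pose lam := (x - p0) *m invmx M.
have lam_near i : `|lam 0 i - c0| < (4 * k%:R)^-1.
  have -> : lam 0 i - c0 = ((x - q) *m invmx M) 0 i.
    by rewrite opprD addrA mulmxBl -mulmxA mulmxV // mulmx1 !mxE.
  apply: le_lt_trans (mulmx_row_entry_le _ _ _) _.
  apply: (@le_lt_trans _ _ (`|x - q| * C)); first by rewrite ler_wpM2l // lerDl.
  by rewrite distrC -ltr_pdivlMr // -invfM.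
have -> : x = p0 + \sum_i lam 0 i *: (p0 + row i M - p0).
  under eq_bigr => i _ do rewrite [p0 + _]addrC addrK.
  by rewrite -mulmx_sum_row mulmxKV // addrC subrK.
apply: convex_comb_mem => // [i|].
  have := lam_near i; rewrite ltr_norml => /andP [lam_gt _].
  have : (4 * k%:R)^-1 <= c0 :> R.
    by rewrite /c0 lef_pV2 ?posrE ?mulr_gt0 // ler_pM2r // ler_nat.
  by move: lam_gt; lra.
apply: (@le_trans _ _ (\sum_(i < k) (c0 + (4 * k%:R)^-1))).
  by apply: ler_sum => i _; have := lam_near i; rewrite ltr_norml => /andP [_]; lra.
rewrite sumr_const card_ord -[_ *+ k]mulr_natr /c0.
have -> : ((2 * k%:R)^-1 + (4 * k%:R)^-1) * k%:R = 3 / 4 :> R.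
  by field; rewrite gt_eqF.
lra.
Qed.

Lemma closure_rowP n (V : set 'rV[R]_n) x :
  closure V x <-> forall e, 0 < e -> exists2 y, V y & `|x - y| < e.
Proof.
split=> [clV e e0 | hV B /nbhs_ballP [e /= e0 eB]].
  by have [y [Vy /ball_rowE]] := clV _ (nbhsx_ballx x _ e0); exists y.
by have [y Vy /ball_rowE xy] := hV e e0; exists y; split => //; exact: eB.
Qed.

Lemma convex_closure n (V : set 'rV[R]_n) : convex V -> convex (closure V).
Proof.
move=> cV x1 x2 t /closure_rowP cl1 /closure_rowP cl2 t0 t1.
apply/closure_rowP => e e0.
have e20 : 0 < e / 2 by rewrite divr_gt0.
have [y1 V1 xy1] := cl1 _ e20; have [y2 V2 xy2] := cl2 _ e20.
exists (t *: y1 + (1 - t) *: y2); first exact: cV.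
have -> : t *: x1 + (1 - t) *: x2 - (t *: y1 + (1 - t) *: y2) =
    t *: (x1 - y1) + (1 - t) *: (x2 - y2).
  by apply/rowP => j; rewrite !mxE; ring.
apply: le_lt_trans (ler_normD _ _) _.
rewrite !normrZ (ger0_norm t0) ger0_norm ?subr_ge0 //.
apply: (@le_lt_trans _ _ (t * (e / 2) + (1 - t) * (e / 2))).
  by apply: lerD; apply: ler_wpM2l; rewrite ?subr_ge0 // ltW.
by rewrite -mulrDl subrKC mul1r; lra.
Qed.

Lemma closed_dilate_preimage n (C : set 'rV[R]_n) c t :
  0 < t -> closed C -> closed (dilate c t @^-1` C).
Proof.
move=> t0 clC x /closure_rowP clx; apply: clC; apply/closure_rowP => e e0.
have [x' Cx' xx'] := clx (e / t) (divr_gt0 e0 t0).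
exists (dilate c t x') => //.
have -> : dilate c t x - dilate c t x' = t *: (x - x').
  by apply/rowP => j; rewrite !mxE; ring.
by rewrite normrZ gtr0_norm // mulrC -ltr_pdivlMr.
Qed.

(* [dilate c t y] is a convex combination of a point of [V] close to [y] and a
   point of the ball around [c]. *)
Lemma dilate_closure_sub n (V : set 'rV[R]_n) c r t y :
  convex V -> 0 < r -> (forall z, `|c - z| < r -> V z) -> closure V y ->
  0 < t -> t < 1 -> V (dilate c t y).
Proof.
move=> cV r0 ballV /closure_rowP clV t0 t1.
have t1' : 0 < 1 - t by rewrite subr_gt0.
have [y' Vy' yy'] := clV (r * (1 - t) / t) (divr_gt0 (mulr_gt0 r0 t1') t0).
pose w := c + (t / (1 - t)) *: (y - y').
have Vw : V w.
  apply: ballV; rewrite /w opprD addrA subrr add0r normrN normrZ.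
  rewrite ger0_norm ?divr_ge0 ?ltW // mulrC -ltr_pdivlMr ?divr_gt0 //.
  by rewrite invf_div mulrA.
have -> : dilate c t y = t *: y' + (1 - t) *: w.
  by apply/rowP => j; rewrite !mxE; field; rewrite gt_eqF.
exact: cV (ltW t0) (ltW t1).
Qed.

Lemma interior_dilate n (U : set 'rV[R]_n) q mu :
  0 < mu -> interior U !=set0 -> interior (dilate q mu @` U) !=set0.
Proof.
move=> mu0 [c /nbhs_ballP [r /= r0 cU]].
exists (dilate q mu c); apply/nbhs_ballP; exists (mu * r) => /= [|z /ball_rowE cz].
  exact: mulr_gt0.
exists (dilate q mu^-1 z); last first.
  by apply/rowP => j; rewrite !mxE; field; rewrite gt_eqF.
apply: cU; apply/ball_rowE.
have -> : c - dilate q mu^-1 z = mu^-1 *: (dilate q mu c - z).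
  by apply/rowP => j; rewrite !mxE; field; rewrite gt_eqF.
by rewrite normrZ gtr0_norm ?invr_gt0 // mulrC ltr_pdivrMr // mulrC.
Qed.

End Topology.

Section LatticeWidth.
Variable R : realType.

Lemma idotD k (v : 'rV[int]_k) (x y : 'rV[R]_k) : idot v (x + y) = idot v x + idot v y.
Proof. by rewrite /idot -big_split; apply: eq_bigr => i _; rewrite mxE mulrDr. Qed.

Lemma idotB k (v : 'rV[int]_k) (x y : 'rV[R]_k) : idot v (x - y) = idot v x - idot v y.
Proof. by rewrite /idot -sumrB; apply: eq_bigr => i _; rewrite !mxE mulrBr. Qed.

Lemma idotZ k (v : 'rV[int]_k) (a : R) (x : 'rV[R]_k) : idot v (a *: x) = a * idot v x.
Proof. by rewrite /idot mulr_sumr; apply: eq_bigr => i _; rewrite mxE mulrCA. Qed.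

Lemma convex_hyperplane k (v : 'rV[int]_k) (c : R) :
  convex [set x : 'rV[R]_k | idot v x = c].
Proof.
by move=> x y t /= xc yc _ _; rewrite idotD !idotZ xc yc -mulrDl subrKC mul1r.
Qed.

Definition spread k (v : 'rV[int]_k) (X : set 'rV[R]_k) : \bar R :=
  (ereal_sup [set (idot v x)%:E | x in X] - ereal_inf [set (idot v x)%:E | x in X])%E.

Lemma width_le_spread k (v : 'rV[int]_k) (B : set 'rV[R]_k) :
  v != 0 -> (width B <= spread v B)%E.
Proof. by move=> v0; apply: ereal_inf_lbound; exists v. Qed.

Lemma spread_le k (v : 'rV[int]_k) (X : set 'rV[R]_k) (c : R) : X !=set0 ->
  (forall x1 x2, X x1 -> X x2 -> idot v x1 - idot v x2 <= c) -> (spread v X <= c%:E)%E.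
Proof.
move=> [x0 Xx0] Xc; rewrite /spread.
set i := ereal_inf _.
have i_lb x1 : X x1 -> ((idot v x1 - c)%:E <= i)%E.
  move=> Xx1; apply: le_ereal_inf_tmp => _ [x2 Xx2 <-].
  by rewrite lee_fin lerBlDr addrC -lerBlDr; exact: Xc.
have i_ub : (i <= (idot v x0)%:E)%E by apply: ereal_inf_lbound; exists x0.
have i_fin : i \is a fin_num.
  by rewrite fin_numElt (lt_le_trans _ (i_lb x0 Xx0)) ?ltNyr // (le_lt_trans i_ub) ?ltry.
have iE : i = (fine i)%:E by rewrite fineK.
move: (fine i) iE i_lb => i' -> i_lb.
rewrite leeBlDr //; apply: ge_ereal_sup => _ [x1 Xx1 <-].
by rewrite -EFinD lee_fin addrC -lerBlDr -lee_fin; exact: i_lb.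
Qed.

Lemma width_flat k (v : 'rV[int]_k) (U : set 'rV[R]_k) (c : R) : v != 0 -> U !=set0 ->
  (forall u, U u -> idot v u = c) -> (width U <= 0%:E)%E.
Proof.
move=> v0 U0 Uc; apply: le_trans (width_le_spread _ v0) (spread_le U0 _).
by move=> x1 x2 Ux1 Ux2; rewrite !Uc // subrr.
Qed.

Lemma width_image_convhull_flat l k (S : set 'rV[R]_l) (sigma : 'rV[R]_l -> 'rV[R]_k)
    (v : 'rV[int]_k) (c : R) :
  affine sigma -> v != 0 -> S !=set0 -> (forall x, S x -> idot v (sigma x) = c) ->
  (width (sigma @` convhull S) <= 0%:E)%E.
Proof.
move=> aff v0 [p0 Sp0] S_flat.
have hull_flat : convhull S `<=` sigma @^-1` [set u | idot v u = c].
  apply: convhull_min => [|x Sx]; last exact: S_flat.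
  exact: convex_preimage aff (convex_hyperplane (v := v) (c := c)).
apply: width_flat v0 _ _ => [|_ [x Ax <-]]; last exact: hull_flat.
by exists (sigma p0), p0 => //; exact: convhull_sub.
Qed.

Lemma width_le_scaled k (U B : set 'rV[R]_k) (z : 'rV[R]_k) (s f : R) :
  0 < s -> U !=set0 -> (forall u, U u -> B (z + s *: u)) ->
  (width B <= f%:E)%E -> (width U <= (f / s)%:E)%E.
Proof.
move=> s0 U0 UB wB; apply/lee_addgt0Pr => e e0.
have : (width B < (f + s * e)%:E)%E.
  by apply: le_lt_trans wB _; rewrite lte_fin ltrDl mulr_gt0.
case/ereal_inf_lt => _ [v v0 <-] vB.
apply: le_trans (width_le_spread _ v0) _; rewrite -EFinD.
apply: spread_le => // u1 u2 Uu1 Uu2.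
have ub : ((idot v (z + s *: u1))%:E <= ereal_sup [set (idot v x)%:E | x in B])%E.
  by apply: ereal_sup_ubound; exists (z + s *: u1) => //; exact: UB.
have lb : (ereal_inf [set (idot v x)%:E | x in B] <= (idot v (z + s *: u2))%:E)%E.
  by apply: ereal_inf_lbound; exists (z + s *: u2) => //; exact: UB.
have := le_lt_trans (leeB ub lb) vB.
rewrite -EFinB lte_fin !idotD !idotZ opprD addrACA subrr add0r -mulrBr => lt_fse.
have -> : f / s + e = (f + s * e) / s by field; rewrite gt_eqF.
by rewrite ler_pdivlMr // mulrC ltW.
Qed.

Definition lattice_free_body k (B : set 'rV[R]_k) :=
  [/\ convex B, closed B, interior B !=set0 & B `&` Zlattice k = set0].

Lemma Flt_cases k : @Flt R k = +oo%E \/ exists f : R, [/\ 0 <= f, @Flt R k = f%:E &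
  forall B : set 'rV[R]_k, lattice_free_body B -> (width B <= f%:E)%E].
Proof.
have [->|Flt_fin] := eqVneq (@Flt R k) +oo%E; [by left | right].
have Flt_ge0 : (0 <= @Flt R k)%E.
  by apply: le_ereal_inf_tmp => _ [lam [lam0 _] <-]; rewrite lee_fin.
have : @Flt R k \is a fin_num by rewrite ge0_fin_numE // lt_neqAle Flt_fin leey.
move/fineK => FltE; exists (fine (@Flt R k)); split => //; first by rewrite -lee_fin FltE.
move=> B [/convex_setP cB clB iB BZ]; rewrite FltE.
by apply: le_ereal_inf_tmp => _ [lam [_ lam_ub] <-]; exact: lam_ub.
Qed.

(* The body is [dilate c t (closure V)] for an interior point [c] of [V]; it
   lies inside [V] by [dilate_closure_sub]. *)
Lemma dilate_sub_lattice_free_body k (V : set 'rV[R]_k) t :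
  convex V -> interior V !=set0 -> V `&` Zlattice k = set0 -> 0 < t -> t < 1 ->
  exists c, exists2 B, lattice_free_body B & dilate c t @` V `<=` B.
Proof.
move=> cV [c /nbhs_ballP [r /= r0 cV_ball]] VZ t0 t1.
have ballV z : `|c - z| < r -> V z by move/ball_rowE; exact: cV_ball.
have t_neq0 : t != 0 by rewrite gt_eqF.
have dilateK x : dilate c t (dilate c t^-1 x) = x.
  by apply/rowP => j; rewrite !mxE; field.
have dilateVK x : dilate c t^-1 (dilate c t x) = x.
  by apply/rowP => j; rewrite !mxE; field.
exists c, (dilate c t^-1 @^-1` closure V); last first.
  by move=> _ [y Vy <-]; rewrite /preimage /= dilateVK; exact: subset_closure.
split.
- exact: convex_preimage (affine_dilate _ _) (convex_closure cV).
- by apply: closed_dilate_preimage; rewrite ?invr_gt0 //; exact: closed_closure.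
- exists c; apply/nbhs_ballP; exists (t * r) => /= [|x /ball_rowE cx].
    exact: mulr_gt0.
  apply/subset_closure/ballV.
  rewrite /dilate opprD addrA subrr add0r normrN normrZ gtr0_norm ?invr_gt0 //.
  by rewrite distrC mulrC ltr_pdivrMr // mulrC.
- rewrite -subset0 => x [Bx Zx]; rewrite -VZ; split => //.
  by rewrite -(dilateK x); exact: dilate_closure_sub cV r0 ballV Bx t0 t1.
Qed.

Lemma le_div_of_forall_lt (w : \bar R) (f z : R) : 0 <= f -> 0 < z ->
  (forall s, 0 < s -> s < z -> (w <= (f / s)%:E)%E) -> (w <= (f / z)%:E)%E.
Proof.
move=> f0 z0 w_le; apply/lee_addgt0Pr => e e0.
have [f_eq0|f_neq0] := eqVneq f 0.
  have := w_le (z / 2) (divr_gt0 z0 (ltr0Sn _ 1)); rewrite f_eq0 !mul0r add0e.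
  by move=> /(_ ltac:(lra)) /le_trans; apply; rewrite lee_fin ltW.
have f_gt0 : 0 < f by rewrite lt_neqAle eq_sym f_neq0.
have fze_gt0 : 0 < f / z + e by rewrite addr_gt0 // divr_gt0.
have := w_le (f / (f / z + e)) (divr_gt0 f_gt0 fze_gt0).
rewrite ltr_pdivrMr // mulrDr mulrCA divff ?gt_eqF // mulr1 ltrDl mulr_gt0 // => /(_ isT).
by rewrite invf_div mulrCA divff ?gt_eqF // mulr1 EFinD.
Qed.

Lemma width_le_of_dilates k (U : set 'rV[R]_k) (f z : R) :
  convex U -> interior U !=set0 -> 0 <= f -> 0 < z ->
  (forall B : set 'rV[R]_k, lattice_free_body B -> (width B <= f%:E)%E) ->
  (forall mu, 0 < mu -> mu < z -> exists q, dilate q mu @` U `&` Zlattice k = set0) ->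
  (width U <= (f / z)%:E)%E.
Proof.
move=> cU iU f0 z0 width_f dilate_free.
have U0 : U !=set0 by case: iU => c /nbhs_singleton Uc; exists c.
apply: le_div_of_forall_lt => // s s0 sz.
pose mu := (s + z) / 2.
have mu0 : 0 < mu by rewrite /mu; lra.
have [q V_free] := dilate_free mu mu0 ltac:(rewrite /mu; lra).
have [t0 t1] : 0 < s / mu /\ s / mu < 1.
  by rewrite divr_gt0 // ltr_pdivrMr // mul1r /mu; split => //; lra.
have [c [B B_free VB]] := dilate_sub_lattice_free_body
  (convex_image (affine_dilate q mu) cU) (interior_dilate q mu0 iU) V_free t0 t1.
pose p := dilate c (s / mu) (q - mu *: q).
apply: (width_le_scaled (z := p) s0 U0 _ (width_f B B_free)).
move=> u Uu; have := VB _ (imageP _ (imageP _ Uu)).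
suff -> : dilate c (s / mu) (dilate q mu u) = p + s *: u by [].
by apply/rowP => j; rewrite !mxE; field; rewrite gt_eqF.
Qed.

End LatticeWidth.

Arguments convex_hyperplane {R k} v c.

Section IntegerKernel.
Variable R : realType.

Lemma row_rat_scale_int k (w : 'rV[rat]_k) :
  exists2 d : rat, d != 0 & exists v : 'rV[int]_k, map_mx intr v = d *: w.
Proof.
exists (\prod_j (denq (w 0 j))%:~R).
  by rewrite prodf_seq_neq0; apply/allP => j _ /=; rewrite intr_eq0 denq_neq0.
exists (\row_j (numq (w 0 j) * \prod_(j' | j' != j) denq (w 0 j'))).
apply/rowP => j; rewrite !mxE rmorphM rmorph_prod [X in _ = X * _](bigD1 j) //= numqE.
ring.
Qed.

Lemma idot_mulmx k (v : 'rV[int]_k) (y : 'rV[R]_k) :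
  idot v y = (y *m (map_mx intr v)^T) 0 0.
Proof. by rewrite /idot !mxE; apply: eq_bigr => j _; rewrite !mxE mulrC. Qed.

Lemma int_kernel k n (M : 'M[R]_(n, k)) : (\rank M < k)%N ->
  (forall i j, M i j \is a Num.int) ->
  exists2 v : 'rV[int]_k, v != 0 & forall x : 'rV[R]_n, idot v (x *m M) = 0.
Proof.
move=> rkM Mint.
pose MQ : 'M[rat]_(n, k) := \matrix_(i, j) (Num.floor (M i j))%:~R.
have MQE : map_mx (@ratr R) MQ = M.
  by apply/matrixP => i j; rewrite !mxE ratr_int floorK.
have /rowV0Pn [w /sub_kermxP wMQ w0] : kermx MQ^T != 0.
  rewrite -mxrank_eq0 -lt0n mxrank_ker mxrank_tr.
  by rewrite -(mxrank_map (@ratr R)) MQE subn_gt0.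
have [d d0 [v vE]] := row_rat_scale_int w.
exists v => [|x].
  apply: contra w0 => /eqP v0; move: vE; rewrite v0 map_mx0 => /esym/eqP.
  by rewrite scaler_eq0 (negbTE d0).
have MQv : MQ *m (map_mx intr v)^T = 0.
  by rewrite vE linearZ /= -scalemxAr -(trmxK MQ) -trmx_mul wMQ trmx0 scaler0.
have Mv : M *m (map_mx intr v)^T = 0.
  rewrite -MQE (_ : map_mx intr v = map_mx (@ratr R) (map_mx intr v)).
    by rewrite map_trmx -map_mxM MQv map_mx0.
  by apply/rowP => j; rewrite !mxE ratr_int.
by rewrite idot_mulmx -mulmxA Mv mulmx0 mxE.
Qed.

Lemma row_free_col_mx n k (M : 'M[R]_(n, k)) (p : 'rV[R]_k) :
  row_free M -> ~~ (p <= M)%MS -> row_free (col_mx M p).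
Proof.
move=> /eqP rkM pM.
have [le_rk eq_rk] := mxrank_leqif_sup (addsmxSl M p).
have : (\rank M < \rank (M + p))%N.
  by rewrite ltn_neqAle eq_rk le_rk addsmx_sub submx_refl (negbTE pM).
rewrite addsmxE rkM -addn1 => lt_rk.
by rewrite /row_free eqn_leq rank_leq_row.
Qed.

(* Take a maximal row-free matrix whose rows are differences [p - p0] of
   points of [L]; unless it is square, every [p - p0] lies in its row space,
   and its integer entries provide an integral normal vector. *)
Lemma lattice_flat_or_spanning k (L : set 'rV[R]_k) p0 :
  L `<=` Zlattice k -> L p0 ->
  (exists2 v : 'rV[int]_k, v != 0 & forall p, L p -> idot v p = idot v p0) \/
  (exists2 M : 'M[R]_k, M \in unitmx & forall i, L (p0 + row i M)).
Proof.
move=> LZ Lp0.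
pose P n := `[< exists2 M : 'M[R]_(n, k), row_free M & forall i, L (p0 + row i M) >].
have P0 : exists n, P n.
  by exists 0%N; apply/asboolP; exists 0 => [|[]]; rewrite // /row_free mxrank0.
have P_le n : P n -> (n <= k)%N.
  by move=> /asboolP [M /eqP rkM _]; rewrite -rkM; exact: rank_leq_col.
have [n /asboolP [M rfM LM] n_max] := ex_maxnP P0 P_le.
have [nk|nk] := eqVneq n k; [right | left].
  by subst n; exists M; first rewrite -row_free_unit.
have inM p : L p -> (p - p0 <= M)%MS.
  move=> Lp; apply/negPn/negP => pM.
  have /n_max : P (n + 1)%N.
    apply/asboolP; exists (col_mx M (p - p0)); first exact: row_free_col_mx.
    move=> i; rewrite -[i](@splitK n 1); case: (fintype.split i) => j /=.
      by rewrite rowKu; exact: LM.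
    rewrite rowKd (ord1 j) (_ : row 0 (p - p0) = p - p0); first by rewrite addrC subrK.
    by apply/rowP => j'; rewrite mxE.
  by rewrite addn1 ltnn.
have Mint i j : M i j \is a Num.int.
  have -> : M i j = (p0 + row i M) 0 j - p0 0 j by rewrite !mxE addrC addKr.
  by apply: rpredB; [exact: (LZ _ (LM i) j) | exact: (LZ _ Lp0 j)].
have [|v v0 vM] := int_kernel _ Mint.
  by rewrite (eqP rfM) ltn_neqAle nk P_le //; apply/asboolP; exists M.
exists v => // p /inM /submxP [lam pE].
by apply/eqP; rewrite -subr_eq0 -idotB pE vM.
Qed.

End IntegerKernel.

Section RelativeDistance.
Variable R : realType.

Lemma rdist_nonempty l (A D : set 'rV[R]_l) (d : R) :
  rdist A D = d%:E -> 0 < d -> A !=set0.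
Proof.
move=> AD_d d0; apply/set0P/negP => /eqP A0; move: AD_d; rewrite /rdist (asboolT A0).
case: ifP => _ // dE.
by move: d0; rewrite -lte_fin -dE ltxx.
Qed.

(* With [W] the diameter of [pi A], both the case [W = 0] (where the ratio is
   [+oo] unless [num = 0]) and the case [W > 0] amount to [r * W < num]. *)
Lemma rdist_ratio_witness l (A D : set 'rV[R]_l) (pi : {linear 'rV[R]_l -> R^o})
    (r : R) :
  A !=set0 -> A `<=` D -> 0 <= r -> (r%:E < rdist_ratio A D pi)%E ->
  exists b W, [/\ D b, forall a a', A a -> A a' -> `|pi a - pi a'| <= W &
                forall a, A a -> r * W < `|pi b - pi a|].
Proof.
move=> [a0 Aa0] AD r0; rewrite /rdist_ratio.
set den := ereal_sup _; set num := ereal_sup _.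
have den_ub a a' : A a -> A a' -> ((`|pi a - pi a'|)%:E <= den)%E.
  by move=> Aa Aa'; apply: ereal_sup_ubound; exists a => //; exists a'.
have den_ge0 : (0 <= den)%E.
  by apply: le_trans (den_ub a0 a0 Aa0 Aa0); rewrite subrr normr0.
have num_ge0 : (0 <= num)%E.
  apply: ereal_sup_ge; exists (ereal_inf [set (`|pi a0 - pi a|)%:E | a in A]).
    by exists a0 => //; exact: AD.
  by apply: le_ereal_inf_tmp => _ [a Aa <-]; rewrite lee_fin.
case: ifP => [_|den_fin]; first by rewrite lte_fin ltNge r0.
have denE : den = (fine den)%:E.
  by rewrite fineK // ge0_fin_numE // lt_neqAle den_fin leey.
move=> r_lt; have rW_num : ((r * fine den)%:E < num)%E.
  move: r_lt; case: ifP => [/eqP den0|den_neq0].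
    case: ifP => [_|num_neq0]; first by rewrite lte_fin ltNge r0.
    rewrite den0 mulr0 => _; rewrite lt_neqAle eq_sym.
    by apply/andP; split; [exact: negbT | exact: num_ge0].
  have W0 : 0 < fine den.
    by rewrite -lte_fin -denE lt_neqAle eq_sym den_neq0 den_ge0.
  by rewrite lte_pdivlMr // -EFinM.
have [_ [b Db <-] b_far] := ereal_sup_gt rW_num.
exists b, (fine den); split => // [a a' Aa Aa'|a Aa].
  by rewrite -lee_fin -denE; exact: den_ub.
rewrite -lte_fin; apply: lt_le_trans b_far _.
by apply: ereal_inf_lbound; exists a.
Qed.

Lemma rdist_witness l (A D : set 'rV[R]_l) (d r : R) :
  A `<=` D -> rdist A D = d%:E -> 0 < d -> 0 <= r -> r < d ->
  exists (pi : {linear 'rV[R]_l -> R^o}) b W, [/\ D b,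
    forall a a', A a -> A a' -> `|pi a - pi a'| <= W &
    forall a, A a -> r * W < `|pi b - pi a|].
Proof.
move=> AD AD_d d0 r0 rd.
have A0 := rdist_nonempty AD_d d0.
have A_neq0 : A <> set0 by move=> A0'; case: A0 => a; rewrite A0'.
have : (r%:E < rdist A D)%E by rewrite AD_d lte_fin.
rewrite /rdist (asboolF A_neq0) => /ereal_sup_gt [_ [pi _ <-]].
by move/(rdist_ratio_witness A0 AD r0) => [b [W witness]]; exists pi, b, W.
Qed.

Lemma dilate_lattice_free l k (D A : set 'rV[R]_l) (sigma : 'rV[R]_l -> 'rV[R]_k)
    (pi : {linear 'rV[R]_l -> R^o}) b W r :
  convex D -> affine sigma -> A `<=` D -> D `&` sigma @^-1` Zlattice k `<=` A ->
  D b -> 0 < r -> (forall a a', A a -> A a' -> `|pi a - pi a'| <= W) ->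
  (forall a, A a -> r * W < `|pi b - pi a|) ->
  dilate (sigma b) (r / (1 + r)) @` (sigma @` A) `&` Zlattice k = set0.
Proof.
move=> cD aff AD DZA Db r0 diamA b_far.
rewrite -subset0 => _ [[_ [a Aa <-] <-] Zx].
set mu := r / (1 + r).
have mu0 : 0 <= mu by rewrite divr_ge0 ?addr_ge0 ?ltW.
have mu1 : mu <= 1 by rewrite ler_pdivrMr ?addr_gt0 // mul1r lerDr.
have muE : mu = r * (1 - mu) by rewrite /mu; field; rewrite gt_eqF // addr_gt0.
pose x := mu *: a + (1 - mu) *: b.
have Ax : A x.
  apply: DZA; split; first exact: cD (AD _ Aa) Db mu0 mu1.
  rewrite /preimage /= /x aff (_ : _ + _ = dilate (sigma b) mu (sigma a)) //.
  by move: (sigma a) (sigma b) => X Y; apply/rowP => j; rewrite !mxE; ring.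
have pixE : pi x = mu * pi a + (1 - mu) * pi b by rewrite linearD !linearZ.
have := b_far x Ax; have := diamA x a Ax Aa.
have -> : pi x - pi a = (1 - mu) * (pi b - pi a) by rewrite pixE; ring.
have -> : pi b - pi x = mu * (pi b - pi a) by rewrite pixE; ring.
rewrite (normrM (1 - mu)) (normrM mu) (ger0_norm mu0) ger0_norm ?subr_ge0 //.
rewrite -(ler_pM2l r0) => xa_le.
by move/(le_lt_trans xa_le); rewrite mulrA -muE ltxx.
Qed.

Lemma dilate_hull_image_lattice_free l k (D : set 'rV[R]_l)
    (sigma : 'rV[R]_l -> 'rV[R]_k) (d mu : R) :
  convex D -> affine sigma ->
  rdist (convhull (D `&` sigma @^-1` Zlattice k)) D = d%:E -> 0 < d ->
  0 < mu -> mu < d / (1 + d) ->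
  exists q, dilate q mu @` (sigma @` convhull (D `&` sigma @^-1` Zlattice k))
              `&` Zlattice k = set0.
Proof.
move=> cD aff AD_d d0 mu0 mu_lt.
set S := D `&` _ in AD_d *.
have mu1 : 0 < 1 - mu.
  by rewrite subr_gt0 (lt_trans mu_lt) // ltr_pdivrMr ?addr_gt0 // mul1r ltrDr.
pose r := mu / (1 - mu).
have r0 : 0 < r by rewrite divr_gt0.
have rd : r < d.
  by move: mu_lt; rewrite ltr_pdivlMr ?addr_gt0 // ltr_pdivrMr //; nra.
have AD : convhull S `<=` D by apply: convhull_min => // x [].
have [pi [b [W [Db diamA b_far]]]] := rdist_witness AD AD_d d0 (ltW r0) rd.
exists (sigma b); rewrite (_ : mu = r / (1 + r)); last by rewrite /r; field; lra.
exact: dilate_lattice_free cD aff AD (convhull_sub S) Db r0 diamA b_far.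
Qed.

End RelativeDistance.

Theorem mainTheorem10 (R : realType) (l k : nat) (D : set 'rV[R]_l)
    (sigma : 'rV[R]_l -> 'rV[R]_k) (delta : R) :
  (0 < l)%N -> (0 < k)%N ->
  convex_set (D : set (convex_lmodType 'rV[R]_l)) ->
  affine_map sigma ->
  rdist (convhull (D `&` sigma @^-1` Zlattice k)) D = delta%:E ->
  0 < delta ->
  (width (sigma @` convhull (D `&` sigma @^-1` Zlattice k))
     <= ((1 + delta) / delta)%:E * Flt k)%E.
Proof.
move=> _ k_gt0 /convex_setP cD /affine_map_affine aff AD_delta delta_gt0.
have c_gt0 : 0 < (1 + delta) / delta by rewrite divr_gt0 ?addr_gt0.
have [->|[f [f_ge0 -> width_f]]] := Flt_cases R k; first by rewrite gt0_muley ?leey.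
have [a Aa] := rdist_nonempty AD_delta delta_gt0.
set S := D `&` _ in AD_delta Aa *.
have [p0 Sp0] : S !=set0.
  by apply/set0P/negP => /eqP S0; move: Aa; rewrite S0 convhull0.
have SZ : sigma @` S `<=` Zlattice k by move=> _ [x [_ Zx] <-].
have [[v v0 S_flat]|[M uM S_span]] := lattice_flat_or_spanning SZ (imageP _ Sp0).
  apply: le_trans (width_image_convhull_flat aff v0 (ex_intro _ p0 Sp0) _) _.
    by move=> x Sx; exact: S_flat (imageP _ Sx).
  by rewrite -EFinM lee_fin (mulr_ge0 (ltW c_gt0) f_ge0).
have cU := convex_image aff (convex_convhull S).
rewrite -EFinM (_ : _ * f = f / (delta / (1 + delta))); last by rewrite invf_div mulrC.
apply: (width_le_of_dilates cU _ f_ge0 _ width_f).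
- apply: convex_simplex_interior k_gt0 cU (imageP _ (convhull_sub S _ Sp0)) uM _.
  by move=> i; have [x Sx <-] := S_span i; exists x => //; exact: convhull_sub.
- by rewrite divr_gt0 ?addr_gt0.
- move=> mu mu0 mu_lt.
  exact: dilate_hull_image_lattice_free cD aff AD_delta delta_gt0 mu0 mu_lt.
Qed.
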